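(* Let $X$ be a complete nonsingular toric variety which is Fano and all of whose toric subvarieties are Fano, with fan $\Delta$. Let $\langle\rho'_1,\ldots,\rho'_k\rangle$ be a cone of $\Delta$ and let $w=a_1\rho'_1+\cdots+a_k\rho'_k$ with integers $a_i\ge1$ for each $i$ and $a_1\ge2$. If $\{\rho_1,\ldots,\rho_j\}$ is any linearly independent set of ray generators of $\Delta$, then $\rho_1+\cdots+\rho_j\neq w$.
   Context: Ray generators are the primitive lattice generators of the rays of $\Delta$. *)

From HB Require Import structures.
From mathcomp Require Import all_boot all_order all_algebra.
Set Implicit Arguments. Unset Strict Implicit. Unset Printing Implicit Defensive.
Import Order.TTheory GRing.Theory Num.Theory.
Local Open Scope ring_scope.

Section Fan.
Variables (n : nat) (I : finType) (ray : I -> 'rV[int]_n) (D : {set {set I}}).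

Definition rayq (i : I) : 'rV[rat]_n := map_mx intr (ray i).

Definition pair (m : 'cV[rat]_n) (i : I) : rat := (rayq i *m m) 0 0.

Definition in_cone (S : {set I}) (v : 'rV[rat]_n) : Prop :=
  exists c : I -> rat, (forall i, i \in S -> 0 <= c i) /\
                        v = \sum_(i in S) c i *: rayq i.

Definition unimodular_cone (S : {set I}) : Prop :=
  exists (B : 'M[int]_n) (f : I -> 'I_n),
    B \in unitmx /\ {in S &, injective f} /\ (forall i, i \in S -> row (f i) B = ray i).

Definition complete_smooth_fan : Prop :=
  [/\ injective ray /\ (forall i, [set i] \in D),
      (forall S T : {set I}, S \in D -> T \subset S -> T \in D),
      (forall (S T : {set I}) v, S \in D -> T \in D -> in_cone S v -> in_cone T v ->
                     in_cone (S :&: T) v),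
      (forall S, S \in D -> unimodular_cone S) &
      (forall v : 'rV[rat]_n, exists2 S, S \in D & in_cone S v)].

Definition maximal_cone (S : {set I}) : bool :=
  (S \in D) && [forall T : {set I}, (T \in D) && (S \subset T) ==> (T == S)].

(* Fano condition for the orbit closure V(tau), stated on its fan Star(tau) in
   N / N_tau: for every maximal cone sigma containing tau, there is a linear
   functional on N_Q vanishing on tau (i.e. one on (N/N_tau)_Q) which is 1 on
   the rays of sigma \ tau and < 1 on every other ray of Star(tau).  This is
   strict convexity of the support function of -K_{V(tau)}. *)
Definition star_fano (tau : {set I}) : Prop :=
  forall sigma, maximal_cone sigma -> tau \subset sigma ->
    exists m : 'cV[rat]_n,
      [/\ (forall i, i \in tau -> pair m i = 0),
          (forall i, i \in sigma :\: tau -> pair m i = 1) &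
          (forall j, j \notin sigma -> (j |: tau) \in D -> pair m j < 1)].

Definition fano : Prop := star_fano set0.

Definition all_toric_subvarieties_fano : Prop :=
  forall tau, tau \in D -> star_fano tau.

Definition lin_indep (S : {set I}) : Prop :=
  forall c : I -> rat, \sum_(i in S) c i *: rayq i = 0 -> forall i, i \in S -> c i = 0.

End Fan.

From mathcomp Require Import all_boot all_order all_algebra.
From mathcomp Require Import lra zify.
From Stdlib Require Import Classical.
Set Implicit Arguments. Unset Strict Implicit. Unset Printing Implicit Defensive.
Import Order.TTheory GRing.Theory Num.Theory.
Local Open Scope ring_scope.

(* If the rays of [S] span a cone of the fan, then [w] has expansions in the
   cones [S] and [T], and these agree on the common face [S :&: T]; but the
   coefficients of [sum S] are 0 or 1 while [a_1 >= 2].  Otherwise [S] contains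
   a primitive collection [P], and it suffices that its primitive relation is
   [sum P = y] for a single ray [y]: replacing [P] by [y] in [S] keeps the sum
   and linear independence and makes [S] smaller.
   The relation is proved in every [Star(tau)] by induction on [#|P|].  Write
   [sum P] in a maximal cone [s] of [Star(tau)], with nonnegative integer
   coefficients [c] off [tau].  The Fano functional [m] of [Star(tau)] is 0 on
   [tau], 1 on the other rays of [s], at most 1 on all rays of [Star(tau)] and
   below 1 on a ray of [P] outside [s], so [1 <= sum c = m (sum P) < #|P|].
   For [#|P| = 2] this leaves a single [y].  For larger [P], pick [x] in [P]
   with [m x > 0]; induction in [Star(x |: tau)] gives
   [sum (P :\ x) = y + h x *: x + (terms in tau)], the fan axioms force
   [h x < 0], and evaluating [m] forces [h x >= -1], so [h x = -1]. *)

Lemma unbounded_affine_ge0 (R : realFieldType) (a b : R) :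
  (forall N, exists l, N <= l /\ 0 <= a + l * b) -> 0 <= b.
Proof.
move=> unb; rewrite leNgt; apply/negP => b_lt0.
have [l [Nl ge0]] := unb (1 - a / b).
have ab : a = a / b * b by rewrite divfK ?lt_eqF.
move: (a / b) ab Nl ge0 => q -> Nl ge0; nra.
Qed.

Lemma sumr_lt_card (R : realDomainType) (I : finType) (P : {set I}) (F : I -> R) x0 :
  x0 \in P -> (forall x, x \in P -> F x <= 1) -> F x0 < 1 -> \sum_(x in P) F x < #|P|%:R.
Proof.
move=> x0P F_le1 Fx0; rewrite (big_setD1 x0) //= (cardsD1 x0 P) x0P natrD.
rewrite -sumr_const; apply: ltr_leD => //; apply: ler_sum => x /setD1P[_]; exact: F_le1.
Qed.

Lemma nonneg_sum_eq1 (I : finType) (U : {set I}) (c : I -> int) :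
  (forall u, u \in U -> 0 <= c u) -> \sum_(u in U) c u = 1 ->
  exists2 u0, u0 \in U & c u0 = 1 /\ forall u, u \in U :\ u0 -> c u = 0.
Proof.
move=> c_ge0 sum1.
have [u0 u0U cu0] : exists2 u0, u0 \in U & c u0 != 0.
  apply/exists_inP; apply: contraPT sum1 => /exists_inPn c0.
  by rewrite big1 // => u /c0 /negPn /eqP.
move: sum1; rewrite (big_setD1 u0) //=; set rest := (X in _ + X) => sum1.
have rest_ge0 : 0 <= rest by apply: sumr_ge0 => u /setD1P[_]; exact: c_ge0.
have cu0_1 : c u0 = 1 by move: (c_ge0 _ u0U) cu0 => + /eqP; lia.
have rest0 : rest = 0 by move: sum1; rewrite cu0_1; lia.
exists u0 => //; split => //; apply: psumr_eq0P rest0 => u /setD1P[_]; exact: c_ge0.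
Qed.

Lemma cardsD1_ge (T : finType) (A : {set T}) x : (#|A| <= #|A :\ x|.+1)%N.
Proof. by rewrite (cardsD1 x A); case: (x \in A). Qed.

Section Fan.
Variables (n : nat) (I : finType) (ray : I -> 'rV[int]_n) (D : {set {set I}}).

Local Notation rq := (rayq ray).
Implicit Types (A B C P Q S T U V tau s : {set I}).

Definition lincomb A (c : I -> rat) : 'rV[rat]_n := \sum_(i in A) c i *: rq i.

Definition pairv (m : 'cV[rat]_n) (v : 'rV[rat]_n) : rat := (v *m m) 0 0.

Lemma eq_lincomb A c d : (forall i, i \in A -> c i = d i) -> lincomb A c = lincomb A d.
Proof. by move=> eq_cd; apply: eq_bigr => i /eq_cd ->. Qed.

Lemma lincombD A c d : lincomb A c + lincomb A d = lincomb A (fun i => c i + d i).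
Proof. by rewrite /lincomb -big_split; apply: eq_bigr => i _; rewrite scalerDl. Qed.

Lemma lincombB A c d : lincomb A c - lincomb A d = lincomb A (fun i => c i - d i).
Proof. by rewrite /lincomb -sumrB; apply: eq_bigr => i _; rewrite scalerBl. Qed.

Lemma lincombZ A a c : a *: lincomb A c = lincomb A (fun i => a * c i).
Proof. by rewrite /lincomb scaler_sumr; apply: eq_bigr => i _; rewrite scalerA. Qed.

Lemma lincomb_eq0 A c : (forall i, i \in A -> c i = 0) -> lincomb A c = 0.
Proof. by move=> c0; rewrite /lincomb big1 // => i /c0 ->; rewrite scale0r. Qed.

Lemma lincomb_set0 c : lincomb set0 c = 0.
Proof. by rewrite /lincomb big_set0. Qed.

Lemma lincomb_set1 i c : lincomb [set i] c = c i *: rq i.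
Proof. by rewrite /lincomb big_set1. Qed.

Lemma lincombU1 i A c : i \notin A -> lincomb (i |: A) c = c i *: rq i + lincomb A c.
Proof. by move=> iA; rewrite /lincomb big_setU1. Qed.

Lemma lincombD1 i A c : i \in A -> lincomb A c = c i *: rq i + lincomb (A :\ i) c.
Proof. by move=> iA; rewrite /lincomb (big_setD1 i). Qed.

Lemma lincombU A B c : [disjoint A & B] -> lincomb (A :|: B) c = lincomb A c + lincomb B c.
Proof. by move=> dAB; rewrite /lincomb -bigU //; apply: eq_bigl => i; rewrite inE. Qed.

Lemma lincomb_setID A B c : B \subset A -> lincomb A c = lincomb B c + lincomb (A :\: B) c.
Proof. by move=> sBA; rewrite /lincomb (big_setID B) /= (setIidPr sBA). Qed.

Lemma lincomb_widen A B c : A \subset B ->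
  lincomb A c = lincomb B (fun i => if i \in A then c i else 0).
Proof.
move=> sAB; rewrite (lincomb_setID _ sAB) [X in _ + X]lincomb_eq0 => [|i /setDP[_ /negbTE->] //].
by rewrite addr0; apply: eq_lincomb => i ->.
Qed.

Lemma lincomb_int A (a : I -> int) :
  lincomb A (fun i => (a i)%:~R) = map_mx intr (\sum_(i in A) a i *: ray i).
Proof.
rewrite /lincomb raddf_sum; apply: eq_bigr => i _.
by apply/matrixP => p q; rewrite !mxE -intrM.
Qed.

Lemma lincomb1_int A : lincomb A (fun=> 1) = map_mx intr (\sum_(i in A) ray i).
Proof.
by rewrite -(eq_lincomb (c := fun=> 1%:~R)) ?lincomb_int //; under eq_bigr do rewrite scale1r.
Qed.

Lemma pairvD m u v : pairv m (u + v) = pairv m u + pairv m v.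
Proof. by rewrite /pairv mulmxDl mxE. Qed.

Lemma pairvZ m a v : pairv m (a *: v) = a * pairv m v.
Proof. by rewrite /pairv -scalemxAl mxE. Qed.

Lemma pairv_ray m i : pairv m (rq i) = pair ray m i.
Proof. by []. Qed.

Lemma pairv_lincomb m A c : pairv m (lincomb A c) = \sum_(i in A) c i * pair ray m i.
Proof.
rewrite /pairv /lincomb mulmx_suml summxE; apply: eq_bigr => i _.
by rewrite -scalemxAl mxE.
Qed.

Lemma lin_indep_coef U c d : lin_indep ray U -> lincomb U c = lincomb U d ->
  forall i, i \in U -> c i = d i.
Proof.
move=> indU eq_cd i iU; apply/eqP; rewrite -subr_eq0; apply/eqP.
by apply: (indU (fun i => c i - d i)) => //; rewrite -/(lincomb U _) -lincombB eq_cd subrr.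
Qed.

Lemma lin_indep_sub U V : lin_indep ray U -> V \subset U -> lin_indep ray V.
Proof.
move=> indU sVU c c0 i iV.
have := indU (fun i => if i \in V then c i else 0).
by rewrite -/(lincomb U _) -lincomb_widen // => /(_ c0 i (subsetP sVU i iV)); rewrite iV.
Qed.

Lemma lincomb_notin_span P tau h : P != set0 -> [disjoint P & tau] ->
  lin_indep ray (P :|: tau) -> lincomb P (fun=> 1) != lincomb tau h.
Proof.
case/set0Pn => x xP dPt indPt; apply/eqP => eq_Pt.
have eq_ext : lincomb (P :|: tau) (fun i => if i \in P then 1 else 0) =
              lincomb (P :|: tau) (fun i => if i \in tau then h i else 0).
  by rewrite -!lincomb_widen ?subsetUl ?subsetUr.
have := lin_indep_coef indPt eq_ext (i := x).
by rewrite inE xP (disjointFr dPt xP) => /(_ isT) /eqP; rewrite oner_eq0.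
Qed.

Lemma in_coneD A u v : in_cone ray A u -> in_cone ray A v -> in_cone ray A (u + v).
Proof.
move=> [c [c_ge0 ->]] [d [d_ge0 ->]]; exists (fun i => c i + d i).
by split; [move=> i iA; rewrite addr_ge0 ?c_ge0 ?d_ge0 | exact: lincombD].
Qed.

Lemma in_cone_lincomb A B c : B \subset A -> (forall i, i \in B -> 0 <= c i) ->
  in_cone ray A (lincomb B c).
Proof.
move=> sBA c_ge0; exists (fun i => if i \in B then c i else 0).
by split; [move=> i _; case: ifPn => // /c_ge0 | exact: lincomb_widen].
Qed.

Lemma in_cone_ray A i a : i \in A -> 0 <= a -> in_cone ray A (a *: rq i).
Proof.
move=> iA a_ge0; rewrite -(lincomb_set1 i (fun=> a)).
by apply: in_cone_lincomb => [|_ _ //]; rewrite sub1set.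
Qed.

Lemma maximal_cone_ext tau : tau \in D -> exists2 s, maximal_cone D s & tau \subset s.
Proof.
move=> tauD.
have tau_ok : [pred s | (s \in D) && (tau \subset s)] tau by rewrite /= tauD subxx.
case: (arg_maxnP (fun s => #|s|) tau_ok) => s /andP[sD tau_s] s_max.
exists s => //; rewrite /maximal_cone sD; apply/forallP => s'.
apply/implyP => /andP[s'D ss']; rewrite eq_sym eqEcard ss'.
by apply: s_max; rewrite /= s'D (subset_trans tau_s ss').
Qed.

Lemma minimal_nonface S : S \notin D ->
  exists P, [/\ P \subset S, P \notin D & forall x, x \in P -> P :\ x \in D].
Proof.
move=> SnD; have S_ok : [pred P : {set I} | (P \subset S) && (P \notin D)] S.
  by rewrite /= subxx.
case: (arg_minnP (fun P : {set I} => #|P|) S_ok) => P /andP[PS PnD] P_min.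
exists P; split=> // x xP; apply/negPn/negP => PxnD.
have := P_min (P :\ x); rewrite /= PxnD (subset_trans (subD1set P x) PS) => /(_ isT).
by rewrite (cardsD1 x P) xP add1n ltnn.
Qed.

Hypothesis hfan : complete_smooth_fan ray D.

Lemma fan_face S T : S \in D -> T \subset S -> T \in D.
Proof. by case: hfan => _ face _ _ _; apply: face. Qed.

Lemma fan_set1 i : [set i] \in D.
Proof. by case: hfan => [[_ ->]]. Qed.

Lemma fan_in_cone_inter S T v : S \in D -> T \in D ->
  in_cone ray S v -> in_cone ray T v -> in_cone ray (S :&: T) v.
Proof. by case: hfan => _ _ inter _ _; apply: inter. Qed.

Lemma fan_cover v : exists2 S, S \in D & in_cone ray S v.
Proof. by case: hfan => _ _ _ _; apply. Qed.

Lemma fan_set0 : set0 \in D.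
Proof. by have [S SD _] := fan_cover 0; apply: fan_face SD (sub0set S). Qed.

(* The dual basis of a cone: columns of the inverse of a unimodular matrix
   whose rows contain its rays. *)
Lemma cone_coord A : A \in D -> exists e : I -> 'cV[int]_n,
  forall i c, i \in A -> pairv (map_mx intr (e i)) (lincomb A c) = c i.
Proof.
case: hfan => _ _ _ unimod _ /unimod [B [f [Bunit [f_inj rowB]]]].
exists (fun i => col (f i) (invmx B)) => i c iA.
have dual j : j \in A -> (ray j *m col (f i) (invmx B)) 0 0 = (j == i)%:R.
  move=> jA; rewrite -(rowB j jA).
  have -> : (row (f j) B *m col (f i) (invmx B)) 0 0 = (B *m invmx B) (f j) (f i).
    by rewrite !mxE; apply: eq_bigr => k _; rewrite !mxE.
  by rewrite mulmxV // mxE (inj_in_eq f_inj).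
rewrite pairv_lincomb (bigD1 i) //= big1 => [|j /andP[jA ji]].
  by rewrite /pair /rayq -map_mxM mxE dual // eqxx mulr1 addr0.
by rewrite /pair /rayq -map_mxM mxE dual // (negbTE ji) mulr0.
Qed.

Lemma cone_lin_indep A : A \in D -> lin_indep ray A.
Proof.
move=> /cone_coord[e coord] c c0 i iA.
by rewrite -(coord i c iA) /lincomb c0 /pairv mul0mx mxE.
Qed.

Lemma cone_coef_int A z c : A \in D -> lincomb A c = map_mx intr z ->
  exists k : I -> int, forall i, i \in A -> c i = (k i)%:~R.
Proof.
move=> /cone_coord[e coord] zc; exists (fun i => (z *m e i) 0 0) => i iA.
by rewrite -(coord i c iA) zc /pairv -map_mxM mxE.
Qed.

Lemma fan_coef_unique B C b c : B \in D -> C \in D ->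
  (forall i, i \in B -> 0 <= b i) -> (forall i, i \in C -> 0 <= c i) ->
  lincomb B b = lincomb C c -> forall i, i \in B -> b i = if i \in C then c i else 0.
Proof.
move=> BD CD b_ge0 c_ge0 eq_bc i iB.
have [d [_ eq_d]] : in_cone ray (B :&: C) (lincomb B b).
  by apply: fan_in_cone_inter => //; [exists b | exists c; rewrite eq_bc].
have on_face U e : U \in D -> B :&: C \subset U -> lincomb U e = lincomb B b ->
    forall j, j \in U -> e j = if j \in B :&: C then d j else 0.
  move=> UD sU eq_e; apply: lin_indep_coef (cone_lin_indep UD) _.
  by rewrite -lincomb_widen // eq_e.
rewrite (on_face B b BD (subsetIl B C) erefl i iB) inE iB /=.
case: ifP => iC //; symmetry.
by rewrite (on_face C c CD (subsetIr B C) (esym eq_bc) i iC) inE iB iC.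
Qed.

Lemma face_sub_of_in_cone tau A : tau \in D -> A \in D ->
  in_cone ray A (lincomb tau (fun=> 1)) -> tau \subset A.
Proof.
move=> tauD AD [c [c_ge0 eq_c]]; apply/subsetP => i itau.
have := fan_coef_unique tauD AD (fun _ _ => ler01) c_ge0 eq_c itau.
by case: (i \in A) => // /eqP; rewrite oner_eq0.
Qed.

Lemma unbounded_cone v w :
  exists2 A, A \in D & forall N, exists l, N <= l /\ in_cone ray A (v + l *: w).
Proof.
apply: NNPP => none.
have bounded A : exists N, A \in D -> forall l, N <= l -> ~ in_cone ray A (v + l *: w).
  apply: NNPP => unb; have AD : A \in D.
    by apply: NNPP => nAD; apply: unb; exists 0.
  apply: none; exists A => // N; apply: NNPP => noN; apply: unb.
  by exists N => _ l Nl inc; apply: noN; exists l.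
have [f f_bd] := fin_all_exists bounded.
have [A AD] := fan_cover (v + (\big[Num.max/0]_A f A) *: w).
exact: f_bd A AD _ (le_bigmax _ _ A).
Qed.

Lemma in_cone_recession A v w : A \in D ->
  (forall N, exists l, N <= l /\ in_cone ray A (v + l *: w)) -> in_cone ray A w.
Proof.
move=> AD unb; have [e coord] := cone_coord AD.
have [l1 [_ [c1 [_ eq1]]]] := unb 0; rewrite -/(lincomb A c1) in eq1.
have [l2 [l12 [c2 [_ eq2]]]] := unb (l1 + 1); rewrite -/(lincomb A c2) in eq2.
have l12_neq : l2 - l1 != 0 by apply: lt0r_neq0; lra.
pose b i := (c2 i - c1 i) / (l2 - l1).
have eq_b : w = lincomb A b.
  have : (v + l2 *: w) - (v + l1 *: w) = (l2 - l1) *: w.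
    by rewrite scalerBl opprD addrACA subrr add0r.
  rewrite eq1 eq2 lincombB => /(congr1 ( *:%R (l2 - l1)^-1)).
  rewrite scalerA mulVf // scale1r lincombZ => <-.
  by apply: eq_lincomb => i _; rewrite mulrC.
exists b; split=> // i iA.
apply: (unbounded_affine_ge0 (a := pairv (map_mx intr (e i)) v)) => N.
have [l [Nl [c [c_ge0 eq_c]]]] := unb N; exists l; split=> //.
by rewrite -(coord i b iA) -eq_b -pairvZ -pairvD eq_c coord // c_ge0.
Qed.

(* [v] is pushed along the interior ray of [tau] until it enters a cone
   containing [tau]; subtracting back the multiple of [tau] only changes the
   coefficients on [tau]. *)
Lemma star_decomp tau v : tau \in D -> exists s c,
  [/\ maximal_cone D s, tau \subset s, forall u, u \in s :\: tau -> 0 <= c u &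
      v = lincomb s c].
Proof.
move=> tauD; set t := lincomb tau (fun=> 1).
have [A AD unb] := unbounded_cone v t.
have tauA := face_sub_of_in_cone tauD AD (in_cone_recession AD unb).
have [l [_ [c [c_ge0 eq_c]]]] := unb 0.
have [s smax As] := maximal_cone_ext AD.
have tau_s := subset_trans tauA As.
exists s, (fun i => (if i \in A then c i else 0) - (if i \in tau then l else 0)).
split=> // [u /setDP[_ /negbTE->]|]; first by rewrite subr0; case: ifP => // /c_ge0.
rewrite -lincombB -!lincomb_widen //.
have -> : lincomb tau (fun=> l) = l *: t.
  by rewrite lincombZ; apply: eq_lincomb => i _; rewrite mulr1.
by rewrite /lincomb -eq_c addrK.
Qed.

Lemma star_decomp_int tau z : tau \in D -> exists s (c : I -> int),
  [/\ maximal_cone D s, tau \subset s, forall u, u \in s :\: tau -> 0 <= c u &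
      map_mx intr z = lincomb s (fun i => (c i)%:~R)].
Proof.
move=> tauD; have [s [c [smax tau_s c_ge0 eq_c]]] := star_decomp (map_mx intr z) tauD.
have [k k_int] := cone_coef_int (andP smax).1 (esym eq_c).
exists s, k; split=> // [u us|]; last by rewrite eq_c; apply: eq_lincomb.
by rewrite -(ler0z rat) -k_int ?c_ge0 //; case/setDP: us.
Qed.

(* Otherwise a large multiple of the rays of [tau] puts one vector in the two
   cones [Q :|: tau] and [y |: (x |: tau)] with incompatible coordinates. *)
Lemma primitive_coef_neg Q tau x y x' (h : I -> rat) :
  Q :|: tau \in D -> [disjoint Q & tau] -> y |: (x |: tau) \in D ->
  x' \in Q -> x' \notin y |: (x |: tau) ->
  lincomb Q (fun=> 1) = rq y + h x *: rq x + lincomb tau h -> h x < 0.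
Proof.
move=> QtD dQt AD x'Q x'A eq_h; rewrite ltNge; apply/negP => hx_ge0.
set lam := \sum_(z in tau) `|h z|.
have lam_h z : z \in tau -> 0 <= lam + h z.
  move=> ztau; have : `|h z| <= lam.
    by rewrite /lam (big_setD1 z) //= lerDl sumr_ge0 // => *; exact: normr_ge0.
  by have := ler_norm (- h z); rewrite normrN; lra.
pose g i := if i \in Q then 1 else lam.
have g_ge0 i : i \in Q :|: tau -> 0 <= g i.
  case/setUP => [iQ|itau]; first by rewrite /g iQ ler01.
  by rewrite /g (disjointFl dQt itau); apply: sumr_ge0 => z _; exact: normr_ge0.
have eq_g : lincomb (Q :|: tau) g = rq y + h x *: rq x + lincomb tau (fun i => lam + h i).
  rewrite lincombU // (eq_lincomb (d := fun=> 1)) => [|i iQ]; last by rewrite /g iQ.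
  rewrite (eq_lincomb (A := tau) (d := fun=> lam)) => [|i itau]; last first.
    by rewrite /g (disjointFl dQt itau).
  by rewrite eq_h -lincombD [lincomb tau (fun=> lam) + _]addrC addrA.
have [d [d_ge0 eq_d]] : in_cone ray (y |: (x |: tau)) (lincomb (Q :|: tau) g).
  rewrite eq_g; apply: in_coneD; first apply: in_coneD.
  - by rewrite -[rq y]scale1r; apply: in_cone_ray; rewrite ?setU11 ?ler01.
  - by apply: in_cone_ray => //; rewrite !inE eqxx orbT.
  - by apply: in_cone_lincomb lam_h; apply/subsetP => z ztau; rewrite !inE ztau !orbT.
have := fan_coef_unique QtD AD g_ge0 d_ge0 eq_d (i := x').
by rewrite /g inE x'Q (negbTE x'A) => /(_ isT) /eqP; rewrite oner_eq0.
Qed.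

(* [P] is a primitive collection of the fan [Star(tau)], with [P :|: tau]
   linearly independent. *)
Definition primitive_over tau P : Prop :=
  [/\ tau \in D, [disjoint P & tau], lin_indep ray (P :|: tau), P :|: tau \notin D &
      forall x, x \in P -> (P :\ x) :|: tau \in D].

(* The primitive relation of [P] in [Star(tau)] reads [sum_(x in P) x = y]. *)
Definition ray_relation tau P : Prop :=
  exists y, [/\ y \notin tau, y |: tau \in D &
    exists h : I -> int, lincomb P (fun=> 1) = rq y + lincomb tau (fun i => (h i)%:~R)].

Lemma primitive_adj tau P x : primitive_over tau P -> (1 < #|P|)%N -> x \in P ->
  x |: tau \in D.
Proof.
case=> _ _ _ _ PxD P_gt1 xP.
have [x' /setD1P[x'x x'P]] : exists x', x' \in P :\ x.
  by apply/set0Pn; rewrite -card_gt0 -ltnS (leq_trans P_gt1 (cardsD1_ge P x)).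
apply: fan_face (PxD x' x'P) _; apply/subsetP => z.
by rewrite !inE => /orP[/eqP-> | ->]; [rewrite eq_sym x'x xP | rewrite orbT].
Qed.

Lemma primitive_over_shift tau P x : primitive_over tau P -> (2 < #|P|)%N -> x \in P ->
  primitive_over (x |: tau) (P :\ x).
Proof.
move=> hP P_gt2 xP; have [_ dPt indPt PtnD PxD] := hP.
have shiftU Q : x \in Q -> (Q :\ x) :|: (x |: tau) = Q :|: tau.
  by move=> xQ; rewrite setUCA setUA setD1K.
split; rewrite ?shiftU //.
- by apply: primitive_adj hP (ltnW P_gt2) xP.
- rewrite disjoints_subset; apply/subsetP => z /setD1P[zx zP].
  by rewrite !inE negb_or zx (disjointFr dPt zP).
- move=> x' /setD1P[x'x x'P].
  have -> : (P :\ x) :\ x' = (P :\ x') :\ x by rewrite !setDDl setUC.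
  by rewrite shiftU ?PxD // !inE eq_sym x'x.
Qed.

(* [m] is the functional of [star_fano tau] at a maximal cone [s] containing
   [tau], and [c] the coordinates of [sum_(x in P) x] given by [star_decomp_int]. *)
Section StarFunctional.
Variables (tau P s : {set I}) (m : 'cV[rat]_n) (c : I -> int).
Hypotheses (hP : primitive_over tau P) (P_gt1 : (1 < #|P|)%N).
Hypotheses (sD : s \in D) (tau_s : tau \subset s).
Hypotheses (m_tau : forall i, i \in tau -> pair ray m i = 0)
  (m_s : forall i, i \in s :\: tau -> pair ray m i = 1)
  (m_lt1 : forall j, j \notin s -> j |: tau \in D -> pair ray m j < 1).
Hypotheses (c_ge0 : forall u, u \in s :\: tau -> 0 <= c u)
  (eq_c : lincomb P (fun=> 1) = lincomb s (fun i => (c i)%:~R)).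

Lemma pair_le1 j : j \notin tau -> j |: tau \in D -> pair ray m j <= 1.
Proof.
move=> jtau jD; case: (boolP (j \in s)) => js; first by rewrite m_s // inE jtau js.
exact/ltW/m_lt1.
Qed.

Lemma pairv_lincomb_tau h : pairv m (lincomb tau h) = 0.
Proof. by rewrite pairv_lincomb big1 // => i /m_tau ->; rewrite mulr0. Qed.

Lemma pairv_sum_coef : pairv m (lincomb P (fun=> 1)) = (\sum_(u in s :\: tau) c u)%:~R.
Proof.
rewrite eq_c (lincomb_setID _ tau_s) pairvD pairv_lincomb_tau add0r pairv_lincomb.
by rewrite rmorph_sum; apply: eq_bigr => u /m_s ->; rewrite mulr1.
Qed.

Lemma sum_coef_ge1 : 1 <= \sum_(u in s :\: tau) c u.
Proof.
have [_ dPt indPt _ _] := hP; rewrite leNgt; apply/negP => sum_lt1.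
have c0 : forall u, u \in s :\: tau -> c u = 0.
  apply: psumr_eq0P c_ge0 _; apply/eqP; rewrite eq_le sumr_ge0 // andbT.
  by rewrite -ltzD1 add0r.
have P0 : P != set0 by rewrite -card_gt0 (ltn_trans _ P_gt1).
have := lincomb_notin_span (fun i => (c i)%:~R) P0 dPt indPt.
rewrite eq_c (lincomb_setID _ tau_s) [X in _ + X]lincomb_eq0 ?addr0 ?eqxx //.
by move=> u /c0 ->.
Qed.

Lemma pairv_ge1 : 1 <= pairv m (lincomb P (fun=> 1)).
Proof. by rewrite pairv_sum_coef ler1z sum_coef_ge1. Qed.

Lemma exists_pair_lt1 : exists2 x0, x0 \in P & pair ray m x0 < 1.
Proof.
have [_ _ _ PtnD _] := hP.
case: (boolP (P \subset s)) => [Ps | /subsetPn[x0 x0P x0s]].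
  by case/negP: PtnD; apply: fan_face sD _; rewrite subUset Ps tau_s.
by exists x0 => //; apply: m_lt1 x0s (primitive_adj hP P_gt1 x0P).
Qed.

Lemma ray_relation_card2 : #|P| = 2 -> ray_relation tau P.
Proof.
move=> card2; have [_ dPt _ _ _] := hP; have [x0 x0P m_x0] := exists_pair_lt1.
have le1 x : x \in P -> pair ray m x <= 1.
  by move=> xP; apply: pair_le1 (primitive_adj hP P_gt1 xP); rewrite (disjointFr dPt xP).
have sum1 : \sum_(u in s :\: tau) c u = 1.
  suff : \sum_(u in s :\: tau) c u < 2 by have := sum_coef_ge1; lia.
  rewrite -(ltr_int rat) -pairv_sum_coef pairv_lincomb.
  under eq_bigr do rewrite mul1r.
  by have := sumr_lt_card x0P le1 m_x0; rewrite card2.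
have [u0 u0_st [cu0 c_rest]] := nonneg_sum_eq1 c_ge0 sum1.
have [u0s u0tau] := setDP u0_st.
exists u0; split=> //; first by apply: fan_face sD _; rewrite subUset sub1set u0s tau_s.
exists c; rewrite eq_c (lincomb_setID _ tau_s) (lincombD1 _ u0_st) cu0 scale1r.
by rewrite [X in _ + (_ + X)]lincomb_eq0 ?addr0 1?addrC // => u /c_rest ->.
Qed.

Lemma ray_relation_step : (2 < #|P|)%N ->
  (forall x, x \in P -> ray_relation (x |: tau) (P :\ x)) -> ray_relation tau P.
Proof.
move=> P_gt2 IH; have [_ dPt _ _ PxD] := hP.
have [x xP m_x] : exists2 x, x \in P & 0 < pair ray m x.
  apply/exists_inP; apply: contraLR pairv_ge1 => /exists_inPn m_le0.
  rewrite -ltNge pairv_lincomb (le_lt_trans _ ltr01) //.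
  by apply: sumr_le0 => y /m_le0; rewrite mul1r leNgt.
have [y [yxtau yxtauD [h eq_h]]] := IH x xP.
have xtau : x \notin tau by rewrite (disjointFr dPt xP).
move: yxtau; rewrite !inE negb_or => /andP[yx ytau].
rewrite lincombU1 // addrA in eq_h.
have [x' /setD1P[x'y x'Px]] : exists x', x' \in (P :\ x) :\ y.
  apply/set0Pn; rewrite -card_gt0 -2!ltnS.
  apply: leq_trans P_gt2 (leq_trans (cardsD1_ge P x) _).
  by rewrite ltnS cardsD1_ge.
have hx_lt0 : h x < 0.
  rewrite -(ltrz0 rat); apply: (primitive_coef_neg (PxD x xP) _ yxtauD x'Px _ eq_h).
    exact: disjointWl (subD1set P x) dPt.
  case/setD1P: x'Px => x'x x'P.
  by rewrite !inE negb_or x'y negb_or x'x (disjointFr dPt x'P).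
have ytauD : y |: tau \in D.
  by apply: fan_face yxtauD _; apply/subsetP => z; rewrite !inE => /orP[]->; rewrite ?orbT.
have hx_ge : -1 <= h x.
  rewrite -(ler_int rat) intrN mulr1z; have := pairv_ge1.
  rewrite (lincombD1 _ xP) eq_h !pairvD !pairvZ pairv_lincomb_tau !pairv_ray mul1r addr0.
  by have := pair_le1 ytau ytauD; nra.
have hx : h x = -1 by apply/eqP; rewrite eq_le hx_ge andbT -ltzD1 addNr.
exists y; split=> //; exists h.
rewrite (lincombD1 _ xP) eq_h hx scale1r (_ : (-1)%:~R = -1) // scaleN1r.
by rewrite addrAC [LHS]addrC subrK.
Qed.

End StarFunctional.

Lemma nonface_card_gt1 P : P \notin D -> (1 < #|P|)%N.
Proof.
rewrite ltnNge; apply: contra => P_le1.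
have /orP[/eqP/cards0_eq -> | /cards1P[x ->]] : (#|P| == 0)%N || (#|P| == 1)%N.
  by case: #|P| P_le1 => [|[|]].
- exact: fan_set0.
- exact: fan_set1.
Qed.

Lemma lin_indep_exchange S P y : lin_indep ray S -> P \subset S -> P != set0 ->
  y \notin S :\: P -> rq y = lincomb P (fun=> 1) -> lin_indep ray (y |: (S :\: P)).
Proof.
move=> indS PS P0 yS eq_y c c0.
have c'0 := indS (fun i => if i \in P then c y else c i).
have {}c'0 : forall i, i \in S -> (if i \in P then c y else c i) = 0.
  apply: c'0; rewrite -/(lincomb S _) (lincomb_setID _ PS).
  rewrite (eq_lincomb (A := P) (d := fun=> c y * 1)) => [|i ->]; last by rewrite mulr1.
  rewrite (eq_lincomb (A := S :\: P) (d := c)) => [|i /setDP[_ /negbTE->]] //.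
  by rewrite -lincombZ -eq_y -lincombU1.
move=> i; rewrite !inE => /orP[/eqP-> | /andP[iP iS]].
  by have [x0 x0P] := set0Pn _ P0; have := c'0 x0 (subsetP PS _ x0P); rewrite x0P.
by have := c'0 i iS; rewrite (negbTE iP).
Qed.

Lemma face_sum_ne S T (a : I -> int) i1 : S \in D -> T \in D ->
  (forall i, i \in T -> 1 <= a i) -> i1 \in T -> 2 <= a i1 ->
  lincomb S (fun=> 1) != lincomb T (fun i => (a i)%:~R).
Proof.
move=> SD TD a_ge1 i1T a_ge2; apply/eqP => eq_Sa.
have a_ge0 i : i \in T -> 0 <= (a i)%:~R :> rat.
  by move=> /a_ge1; rewrite ler0z; apply: le_trans.
have a2 : 2 <= (a i1)%:~R :> rat by rewrite -[2 : rat]/((2 : int)%:~R) ler_int.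
move: a2; have := fan_coef_unique TD SD a_ge0 (fun _ _ => ler01) (esym eq_Sa) i1T.
by case: ifP => _ ->; lra.
Qed.

Hypothesis hsub : all_toric_subvarieties_fano ray D.

Lemma primitive_ray_relation k tau P : #|P| = k.+2 -> primitive_over tau P ->
  ray_relation tau P.
Proof.
elim: k tau P => [|k IH] tau P cardP hP; have [tauD _ _ _ _] := hP;
  have [s [c [smax tau_s c_ge0 eq_c]]] := star_decomp_int (\sum_(i in P) ray i) tauD;
  have [m [m_tau m_s m_lt1]] := hsub tauD smax tau_s;
  have sD : s \in D := (andP smax).1; rewrite -lincomb1_int in eq_c.
- by apply: (ray_relation_card2 (s := s) (m := m) (c := c)); rewrite ?cardP.
- apply: (ray_relation_step (s := s) (m := m) (c := c)); rewrite ?cardP // => x xP.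
  apply: IH; last by apply: primitive_over_shift; rewrite ?cardP.
  by move: (cardsD1 x P); rewrite xP cardP => -[].
Qed.

Lemma nonface_reduce S : lin_indep ray S -> S \notin D -> exists S',
  [/\ (#|S'| < #|S|)%N, lin_indep ray S' & lincomb S' (fun=> 1) = lincomb S (fun=> 1)].
Proof.
move=> indS SnD; have [P [PS PnD PxD]] := minimal_nonface SnD.
have P_gt1 := nonface_card_gt1 PnD.
have P0 : P != set0 by rewrite -card_gt0 ltnW.
have hP : primitive_over set0 P.
  split; rewrite ?setU0 ?fan_set0 //.
  - by rewrite -setI_eq0 setI0.
  - exact: lin_indep_sub indS PS.
  - by move=> x /PxD; rewrite setU0.
have cardP : #|P| = (#|P| - 2).+2 by rewrite -addn2 subnK.
have [y [_ _ [h]]] := primitive_ray_relation cardP hP.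
rewrite lincomb_set0 addr0 => eq_y.
have yS : y \notin S :\: P.
  apply/negP => /setDP[yS yP].
  have indPy : lin_indep ray (P :|: [set y]).
    by apply: lin_indep_sub indS _; rewrite subUset sub1set yS PS.
  have dPy : [disjoint P & [set y]] by rewrite disjoint_sym disjoints1 yP.
  by have := lincomb_notin_span (fun=> 1) P0 dPy indPy; rewrite lincomb_set1 scale1r eq_y eqxx.
exists (y |: (S :\: P)); split.
- rewrite cardsU1 yS cardsD (setIidPr PS); have := subset_leq_card PS; lia.
- exact: lin_indep_exchange.
- by rewrite lincombU1 // (lincomb_setID _ PS) eq_y scale1r.
Qed.

Lemma lin_indep_sum_ne T (a : I -> int) i1 : T \in D ->
  (forall i, i \in T -> 1 <= a i) -> i1 \in T -> 2 <= a i1 ->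
  forall S, lin_indep ray S -> lincomb S (fun=> 1) != lincomb T (fun i => (a i)%:~R).
Proof.
move=> TD a_ge1 i1T a_ge2 S; elim: {S}_.+1 {-2}S (ltnSn #|S|) => // k IH S S_le indS.
have [SD | SnD] := boolP (S \in D); first exact: (face_sum_ne SD TD a_ge1 i1T a_ge2).
have [S' [S'_lt indS' <-]] := nonface_reduce indS SnD.
by apply: IH indS'; apply: leq_trans S'_lt _.
Qed.

End Fan.

Theorem lemma3p4 (n : nat) (I : finType) (ray : I -> 'rV[int]_n)
    (D : {set {set I}})
    (hfan : complete_smooth_fan ray D)
    (hfano : fano ray D)
    (hsub : all_toric_subvarieties_fano ray D)
    (T : {set I}) (hT : T \in D)
    (a : I -> int) (ha : forall i, i \in T -> 1 <= a i)
    (i1 : I) (hi1 : i1 \in T) (ha1 : 2 <= a i1)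
    (S : {set I}) (hS : lin_indep ray S) :
  \sum_(i in S) ray i != \sum_(i in T) a i *: ray i.
Proof.
(* [hfano] is the case [tau = set0] of [hsub]. *)
apply: contra (lin_indep_sum_ne hfan hsub hT ha hi1 ha1 hS) => /eqP eq_sums.
by rewrite lincomb1_int lincomb_int eq_sums.
Qed.
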